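(* Let $(C,\mathfrak p,\mathfrak d)$ be a regular $q$-cycle coalgebra and let $s\ge1$ be an integer such that $(\mathfrak p_{10}^1)^r\ne1$ for all $0<r<s$. Then $\mathfrak p_{ij}^k=\mathfrak d_{ij}^k=0$ whenever $i,j\ne0$ and $i+j\le s$ (with $0\le i,j,k\le n-1$). Moreover, the formula $$\mathfrak d_{i0}^1\bigl(\mathfrak p_{10}^1-\mathfrak p_{i0}^i\bigr)=\sum_{h=1}^{i-1}\mathfrak p_{i0}^h\mathfrak d_{h0}^1-\sum_{h=2}^{i}\mathfrak d_{i0}^h\mathfrak p_{h0}^1$$ defines recursively $\mathfrak d_{i0}^1$ for $1<i\le s$ (with $i\le n-1$).
   Context: $K$ is an algebraically closed field of characteristic $0$ and $n\ge2$. $C$ is the coalgebra dual to $K[y]/\langle y^n\rangle$: basis $x_0,\dots,x_{n-1}$, $\Delta(x_i)=\sum_{j+k=i}x_j\otimes x_k$, $\epsilon(x_i)=\delta_{i0}$; $C\otimes C$ has the tensor product coalgebra structure; Sweedler notation $\Delta(b)=b_{(1)}\otimes b_{(2)}$. For linear maps $\mathfrak p,\mathfrak d\colon C\otimes C\to C$ write $a\cdot b=\mathfrak p(a\otimes b)$, $a:b=\mathfrak d(a\otimes b)$, $\mathfrak p(x_i\otimes x_j)=\sum_{k=0}^{n-1}\mathfrak p_{ij}^kx_k$, $\mathfrak d(x_i\otimes x_j)=\sum_{k=0}^{n-1}\mathfrak d_{ij}^kx_k$. A triple $(C,\mathfrak p,\mathfrak d)$ with $\mathfrak p,\mathfrak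 d$ coalgebra morphisms is a regular $q$-magma coalgebra if there are coalgebra morphisms $a\otimes b\mapsto a^b$, $a\otimes b\mapsto a_b$ from $C\otimes C$ to $C$ with $a^{b_{(1)}}\cdot b_{(2)}=(a\cdot b_{(1)})^{b_{(2)}}=\epsilon(b)a$ and $(a:b_{(2)})_{b_{(1)}}=a_{b_{(2)}}:b_{(1)}=\epsilon(b)a$. It is a regular $q$-cycle coalgebra if moreover for all $a,b,c$: (1) $(a\cdot b_{(1)})\cdot(c:b_{(2)})=(a\cdot c_{(2)})\cdot(b\cdot c_{(1)})$; (2) $(a\cdot b_{(1)}):(c\cdot b_{(2)})=(a:c_{(2)})\cdot(b:c_{(1)})$; (3) $(a:b_{(1)}):(c:b_{(2)})=(a:c_{(2)}):(b\cdot c_{(1)})$. *)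

From mathcomp Require Import all_boot all_order all_algebra.
Set Implicit Arguments. Unset Strict Implicit. Unset Printing Implicit Defensive.
Import GRing.Theory.
Local Open Scope ring_scope.

(* The coalgebra C dual to K[y]/<y^n>: an element of C is its coordinate
   vector on the basis x_0, ..., x_{n-1}; an element of C (x) C is its
   coordinate matrix on the basis x_a (x) x_b. *)
Section QCycle.
Variables (K : fieldType) (n : nat).

Definition vect := {ffun 'I_n -> K}.
Definition tens := {ffun 'I_n * 'I_n -> K}.

(* A linear map C (x) C -> C, given by its structure constants:
   m i j k is the coefficient of x_k in m(x_i (x) x_j)  (i.e. m_{ij}^k).
   Only indices < n are meaningful. *)
Definition lmap := nat -> nat -> nat -> K.

Definition bx (i : 'I_n) : vect := [ffun k => (k == i)%:R].

Definition eps (u : vect) : K := \sum_(k < n | val k == 0%N) u k.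

(* comultiplication: Delta(x_k) = sum_{a+b=k} x_a (x) x_b *)
Definition comul (u : vect) : tens :=
  [ffun ab : 'I_n * 'I_n => \sum_(k < n | val k == (val ab.1 + val ab.2)%N) u k].

Definition app (m : lmap) (u v : vect) : vect :=
  [ffun k : 'I_n => \sum_(i < n) \sum_(j < n) u i * v j * m i j k].

(* Sweedler sum: sum_(b) F(b_(1), b_(2)), for F bilinear *)
Definition sw (b : vect) (F : vect -> vect -> vect) : vect :=
  [ffun k => \sum_(b1 < n) \sum_(b2 < n) comul b (b1, b2) * F (bx b1) (bx b2) k].

Definition escal (b a : vect) : vect := [ffun k => eps b * a k].

(* m : C (x) C -> C is a coalgebra morphism, C (x) C carrying the tensor
   product coalgebra structure (checked on pure tensors, which span). *)
Definition is_coalg_morph (m : lmap) : Prop :=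
  forall a b : vect,
    comul (app m a b) =
      [ffun xy : 'I_n * 'I_n =>
        \sum_(a1 < n) \sum_(a2 < n) \sum_(b1 < n) \sum_(b2 < n)
          comul a (a1, a2) * comul b (b1, b2) *
          (app m (bx a1) (bx b1) xy.1 * app m (bx a2) (bx b2) xy.2)]
    /\ eps (app m a b) = eps a * eps b.

(* regular q-magma coalgebra; up a b = a^b, lo a b = a_b,
   app p a b = a . b, app d a b = a : b *)
Definition regular_qmagma (p d : lmap) : Prop :=
  is_coalg_morph p /\ is_coalg_morph d /\
  exists up lo : lmap, is_coalg_morph up /\ is_coalg_morph lo /\
    forall a b : vect,
      [/\ sw b (fun u v => app p (app up a u) v) = escal b a,
          sw b (fun u v => app up (app p a u) v) = escal b a,
          sw b (fun u v => app lo (app d a v) u) = escal b a &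
          sw b (fun u v => app d (app lo a v) u) = escal b a].

Definition regular_qcycle (p d : lmap) : Prop :=
  regular_qmagma p d /\
  forall a b c : vect,
    [/\ sw b (fun u v => app p (app p a u) (app d c v)) =
          sw c (fun u v => app p (app p a v) (app p b u)),
        sw b (fun u v => app d (app p a u) (app p c v)) =
          sw c (fun u v => app p (app d a v) (app d b u)) &
        sw b (fun u v => app d (app d a u) (app d c v)) =
          sw c (fun u v => app d (app d a v) (app p b u))].

End QCycle.

(* Write q := p_{10}^1.  A coalgebra morphism m : C (x) C -> C is governed by its
   x_1-coefficients: comultiplicativity gives
   m_{ij}^{k+1} = sum_{a<=i, b<=j} m_{ab}^1 m_{i-a,j-b}^k, and as y^n = 0 this yields
   m_{00}^1 = 0, m_{ij}^k = 0 for i + j < k, m_{k0}^k = (m_{10}^1)^k and, in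
   characteristic 0 with m_{10}^1 <> 0, also m_{01}^1 = 0.  Regularity makes
   p_{10}^1 and d_{10}^1 invertible.  The coefficients p_{ij}^1, d_{ij}^1 with j > 0
   then vanish by induction on M = i + j <= s: evaluated on x_i, x_j, x_0 at the
   coordinate x_1, each of the cycle identities (1) and (2) reduces, by the induction
   hypothesis, to X q = q^M X for X = p_{ij}^1 resp. d_{ij}^1, and q^{M-1} <> 1 forces
   X = 0.  Vanishing of the x_1-coefficients below total degree s + 1 propagates to
   all coordinates, and identity (2) with c = x_0 is the recursion for d_{i0}^1. *)

From mathcomp Require Import all_boot all_order all_algebra.
From mathcomp Require Import zify ring.
Import GRing.Theory.
Local Open Scope ring_scope.

Set Implicit Arguments. Unset Strict Implicit. Unset Printing Implicit Defensive.

Section BigDelta.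
Variable R : pzSemiRingType.

Lemma big_ord_only N (F : 'I_N -> R) i0 (lt_i0N : (i0 < N)%N) :
  (forall i : 'I_N, i != i0 :> nat -> F i = 0) -> \sum_i F i = F (Ordinal lt_i0N).
Proof. by move=> F0; apply: big_only1 => // i ne_i _; apply: F0. Qed.

Lemma big_ord_delta N (F : nat -> R) (s : nat) :
  \sum_(k < N) (k == s :> nat)%N%:R * F k = if (s < N)%N then F s else 0.
Proof.
case: ifP => [lt_sN | /negbT ge_sN].
  rewrite (big_ord_only lt_sN) /= ?eqxx ?mul1r // => k /negbTE ->.
  by rewrite mul0r.
by apply: big1 => k _; rewrite (_ : (k == s :> nat) = false) ?mul0r //; have := ltn_ord k; lia.
Qed.

Lemma big_antidiag N i (G : nat -> nat -> R) : (i < N)%N ->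
  \sum_(a < N) \sum_(b < N) (a + b == i)%N%:R * G a b = \sum_(a < i.+1) G a (i - a)%N.
Proof.
move=> lt_iN; rewrite (big_ord_widen N (fun a => G a (i - a)%N) lt_iN) [RHS]big_mkcond /=.
apply: eq_bigr => a _; rewrite ltnS; case: leqP => [le_ai | lt_ia].
  transitivity (\sum_(b < N) (b == i - a :> nat)%N%:R * G a b).
    by apply: eq_bigr => b _; congr (_%:R * _); lia.
  by rewrite big_ord_delta ifT //; lia.
by apply: big1 => b _; rewrite (_ : (a + b == i)%N = false) ?mul0r //; lia.
Qed.

Lemma big_antidiag2 N i j (G : nat -> nat -> nat -> nat -> R) :
  (i < N)%N -> (j < N)%N ->
  \sum_(a1 < N) \sum_(a2 < N) \sum_(b1 < N) \sum_(b2 < N)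
    (a1 + a2 == i)%N%:R * (b1 + b2 == j)%N%:R * G a1 b1 a2 b2
  = \sum_(a < i.+1) \sum_(b < j.+1) G a b (i - a)%N (j - b)%N.
Proof.
move=> lt_iN lt_jN.
rewrite -(big_antidiag (fun a1 a2 => \sum_(b < j.+1) G a1 b a2 (j - b)%N) lt_iN).
apply: eq_bigr => a1 _; apply: eq_bigr => a2 _.
rewrite -(big_antidiag (G a1 ^~ a2) lt_jN) big_distrr; apply: eq_bigr => b1 _.
by rewrite big_distrr; apply: eq_bigr => b2 _; rewrite -mulrA.
Qed.

End BigDelta.

Lemma eq0_of_mul_exprS (R : idomainType) (x q : R) k :
  q != 0 -> q ^+ k != 1 -> x * q = q ^+ k.+1 * x -> x = 0.
Proof.
move=> q_neq0 qk_neq1 xq_eq.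
have : x * q * (1 - q ^+ k) = 0 by rewrite -[RHS](subrr (x * q)) {3}xq_eq exprS; ring.
move/eqP; rewrite !mulf_eq0 (negbTE q_neq0) subr_eq0 [1 == _]eq_sym (negbTE qk_neq1).
by rewrite !orbF => /eqP.
Qed.

Section BasisVectors.
Variables (K : fieldType) (n : nat).
Implicit Types (m : lmap K) (u : vect K n).

Lemma bxE (i k : 'I_n) : bx K i k = (k == i)%:R.
Proof. by rewrite ffunE. Qed.

Lemma app_bx m (i j k : 'I_n) : app m (bx K i) (bx K j) k = m i j k.
Proof.
rewrite ffunE (big_only1 i) // => [|i' /negbTE ne_i _]; last first.
  by apply: big1 => j' _; rewrite bxE ne_i !mul0r.
rewrite (big_only1 j) // => [|j' /negbTE ne_j _]; last by rewrite !bxE ne_j mulr0 mul0r.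
by rewrite !bxE !eqxx !mul1r.
Qed.

Lemma comulE u (x y : 'I_n) : comul u (x, y) = \sum_(k < n) (k == x + y :> nat)%N%:R * u k.
Proof. by rewrite ffunE big_mkcond; apply: eq_bigr => k _; case: ifP; rewrite ?mul1r ?mul0r. Qed.

Lemma comul_bx (i : 'I_n) (ab : 'I_n * 'I_n) : comul (bx K i) ab = (ab.1 + ab.2 == i)%N%:R.
Proof.
case: ab => x y; rewrite comulE (big_only1 i) // => [|k /negbTE ne_k _].
  by rewrite bxE eqxx mulr1 eq_sym.
by rewrite bxE ne_k mulr0.
Qed.

Lemma eps_bx (i : 'I_n) : eps (bx K i) = (i == 0 :> nat)%N%:R.
Proof.
rewrite /eps big_mkcond (big_only1 i) //= => [|k /negbTE ne_k _].
  by rewrite bxE eqxx; case: ifP.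
by rewrite bxE ne_k; case: ifP.
Qed.

Lemma eps_ord0 u (n_gt0 : (0 < n)%N) : eps u = u (Ordinal n_gt0).
Proof. by rewrite /eps (big_pred1 (Ordinal n_gt0)) // => k; rewrite -val_eqE. Qed.

Lemma escal_bx0 u (o : 'I_n) : o = 0%N :> nat -> escal (bx K o) u = u.
Proof. by move=> o0; apply/ffunP => k; rewrite ffunE eps_bx o0 mul1r. Qed.

Lemma sw_bx (F : vect K n -> vect K n -> vect K n) (J k : 'I_n) :
  sw (bx K J) F k = \sum_(b1 < n) \sum_(b2 < n) (b1 + b2 == J)%N%:R * F (bx K b1) (bx K b2) k.
Proof. by rewrite ffunE; apply: eq_bigr => b1 _; apply: eq_bigr => b2 _; rewrite comul_bx. Qed.

Lemma sw_bx0 (F : vect K n -> vect K n -> vect K n) (o : 'I_n) :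
  o = 0%N :> nat -> sw (bx K o) F = F (bx K o) (bx K o).
Proof.
move=> o0; apply/ffunP => k; rewrite sw_bx (big_only1 o) // => [|b1 ne_b1 _]; last first.
  apply: big1 => b2 _; rewrite (_ : (b1 + b2 == o)%N = false) ?mul0r //.
  by move: ne_b1; rewrite -val_eqE /= o0; lia.
rewrite (big_only1 o) // => [|b2 ne_b2 _]; first by rewrite o0 mul1r.
by rewrite (_ : (o + b2 == o)%N = false) ?mul0r //; move: ne_b2; rewrite -val_eqE /= o0; lia.
Qed.

End BasisVectors.

(* Numerals given to an [lmap] carry %N: in ring_scope a bare [1 : nat] elaborates to
   [GRing.one nat], which is convertible to [1%N] but not matched by rewriting. *)
Definition vanish1_below (K : fieldType) n (m : lmap K) (M : nat) :=
  forall i j, (i < n)%N -> (j < n)%N -> (0 < j)%N -> (i + j < M)%N -> m i j 1%N = 0.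

Section CoalgMorph.
Variables (K : fieldType) (n : nat) (m : lmap K).
Hypotheses (n_gt1 : (1 < n)%N) (m_morph : is_coalg_morph n m).
Let n_gt0 : (0 < n)%N := ltnW n_gt1.

Lemma coalg_morph_counit i j : (i < n)%N -> (j < n)%N ->
  m i j 0%N = ((i == 0) && (j == 0))%N%:R.
Proof.
move=> lt_in lt_jn; have [_] := m_morph (bx K (Ordinal lt_in)) (bx K (Ordinal lt_jn)).
by rewrite (eps_ord0 _ n_gt0) app_bx !eps_bx => ->; rewrite -natrM mulnb.
Qed.

Lemma coalg_morph_comul i j x y : (i < n)%N -> (j < n)%N -> (x < n)%N -> (y < n)%N ->
  (if (x + y < n)%N then m i j (x + y)%N else 0) =
  \sum_(a < i.+1) \sum_(b < j.+1) m a b x * m (i - a)%N (j - b)%N y.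
Proof.
move=> lt_in lt_jn lt_xn lt_yn.
have [+ _] := m_morph (bx K (Ordinal lt_in)) (bx K (Ordinal lt_jn)).
move/(congr1 (fun f : tens K n => f (Ordinal lt_xn, Ordinal lt_yn))).
rewrite comulE ffunE /=; under eq_bigr do rewrite app_bx.
rewrite big_ord_delta => ->.
under eq_bigr do under eq_bigr do under eq_bigr do under eq_bigr do rewrite !comul_bx !app_bx /=.
exact: (big_antidiag2 (fun a b a' b' => m a b x * m a' b' y)).
Qed.

Lemma coalg_morph_succ i j k : (i < n)%N -> (j < n)%N -> (k.+1 < n)%N ->
  m i j k.+1 = \sum_(a < i.+1) \sum_(b < j.+1) m a b 1%N * m (i - a)%N (j - b)%N k.
Proof.
move=> lt_in lt_jn lt_k1n.
by rewrite -(coalg_morph_comul lt_in lt_jn n_gt1 (ltnW lt_k1n)) add1n lt_k1n.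
Qed.

Lemma coalg_morph001 : m 0%N 0%N 1%N = 0.
Proof.
have m00E k : (k < n)%N -> m 0%N 0%N k = m 0%N 0%N 1%N ^+ k.
  elim: k => [|k IHk] lt_kn; first by rewrite coalg_morph_counit ?expr0 //; lia.
  by rewrite coalg_morph_succ // !big_ord1 IHk ?exprS //; lia.
have lt_n1n : (n.-1 < n)%N by lia.
have := coalg_morph_comul n_gt0 n_gt0 n_gt1 lt_n1n.
rewrite ifF; last by lia.
rewrite !big_ord1 sub0n (m00E n.-1) // -exprS => /esym/eqP.
by rewrite expf_eq0 => /andP[_ /eqP].
Qed.

Lemma coalg_morph_deg i j k : (i < n)%N -> (j < n)%N -> (k < n)%N -> (i + j < k)%N ->
  m i j k = 0.
Proof.
elim: k i j => [//|k IHk] i j lt_in lt_jn lt_kn lt_ijk.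
rewrite coalg_morph_succ //; apply: big1 => -[a lt_a] _; apply: big1 => -[b lt_b] _ /=.
case: (posnP (a + b)) => [/eqP | pos_ab].
  by rewrite addn_eq0 => /andP[/eqP -> /eqP ->]; rewrite coalg_morph001 mul0r.
by rewrite IHk ?mulr0 //; lia.
Qed.

Lemma coalg_morph_top0 k : (k < n)%N -> m k 0%N k = m 1%N 0%N 1%N ^+ k.
Proof.
elim: k => [|k IHk] lt_kn; first by rewrite coalg_morph_counit ?expr0 //; lia.
rewrite coalg_morph_succ //; under eq_bigr do rewrite big_ord1 /=.
rewrite (big_ord_only (_ : 1 < k.+2)%N) //= => [|a ne_a1].
  by rewrite subSS subn0 IHk ?exprS //; lia.
case: (posnP a) => [-> | pos_a]; first by rewrite coalg_morph001 mul0r.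
by rewrite [m _ _ k]coalg_morph_deg ?mulr0 //; have := ltn_ord a; lia.
Qed.

Lemma coalg_morph_comul_top1 k : (k < n)%N ->
  \sum_(a < k.+1) \sum_(b < 2%N) m a b 1%N * m (k - a)%N (1 - b)%N k =
  k.+1%:R * m 1%N 0%N 1%N ^+ k * m 0%N 1%N 1%N.
Proof.
elim: k => [|k IHk] lt_kn.
  rewrite big_ord1 big_ord_recl big_ord1 /= coalg_morph001 mul0r add0r.
  by rewrite (_ : bump 0 0 = 1%N) // sub0n subnn coalg_morph_counit // expr0 !mul1r mulr1.
under eq_bigr do rewrite big_ord_recl big_ord1 lift0 /=.
rewrite big_split /= (big_ord_only (_ : 1 < k.+2)%N) //= => [|a ne_a1]; last first.
  case: (posnP a) => [-> | pos_a]; first by rewrite coalg_morph001 mul0r.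
  by rewrite [m _ _ k.+1]coalg_morph_deg ?mulr0 //; have := ltn_ord a; lia.
rewrite big_ord_recl big1 => [|a _]; last first.
  by rewrite lift0 [m _ _ k.+1]coalg_morph_deg ?mulr0 //; have := ltn_ord a; lia.
have top1 : m k 1%N k.+1 = k.+1%:R * m 1%N 0%N 1%N ^+ k * m 0%N 1%N 1%N.
  rewrite (coalg_morph_succ (_ : k < n)%N n_gt1 lt_kn); last lia.
  by apply: IHk; lia.
rewrite addr0 subSS !subn0 subnn top1 /= ?subn0 (coalg_morph_top0 lt_kn) exprS -[k.+2%:R]natr1.
ring.
Qed.

Lemma coalg_morph_vanish1_below2 :
  [pchar K] =i pred0 -> m 1%N 0%N 1%N != 0 -> vanish1_below n m 2.
Proof.
move=> /pcharf0P char0 m101_neq0 i j _ _ pos_j lt_ij2.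
(* Comultiplicativity at x_1 (x) x_{n-1} overflows: n (m_{10}^1)^{n-1} m_{01}^1 = 0. *)
have [-> ->] : i = 0%N /\ j = 1%N by lia.
have lt_n1n : (n.-1 < n)%N by lia.
have := coalg_morph_comul lt_n1n n_gt1 n_gt1 lt_n1n.
rewrite ifF ?coalg_morph_comul_top1 //; last by lia.
move/esym/eqP; rewrite !mulf_eq0 expf_eq0 (negbTE m101_neq0) andbF orbF char0 /=.
exact/eqP.
Qed.

Lemma coalg_morph_vanish M : vanish1_below n m M ->
  forall k i j, (k < n)%N -> (i < n)%N -> (j < n)%N -> (0 < j)%N ->
  ((i + j).+1 < M + k)%N -> m i j k = 0.
Proof.
move=> vanish_m; elim=> [|k IHk] i j lt_kn lt_in lt_jn pos_j lt_ijMk.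
  by rewrite coalg_morph_counit // (_ : (j == 0) = false) ?andbF //; lia.
rewrite coalg_morph_succ //; apply: big1 => -[a lt_a] _; apply: big1 => -[b lt_b] _ /=.
case: (posnP b) => [b0 | pos_b].
  rewrite b0; case: (posnP a) => [-> | pos_a]; first by rewrite coalg_morph001 mul0r.
  by rewrite (IHk (i - a)%N (j - 0)%N) ?mulr0 //; lia.
case: (ltnP (a + b) M) => [lt_abM | le_Mab]; first by rewrite vanish_m ?mul0r //; lia.
by rewrite [m _ _ k]coalg_morph_deg ?mulr0 //; lia.
Qed.

Lemma coalg_morph_vanish_below M : vanish1_below n m M ->
  forall i j k, (i < n)%N -> (j < n)%N -> (k < n)%N -> (0 < j)%N -> (i + j < M)%N ->
  m i j k = 0.
Proof.
move=> vanish_m i j [|k] lt_in lt_jn lt_kn pos_j lt_ijM.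
  by rewrite coalg_morph_counit // (_ : (j == 0) = false) ?andbF //; lia.
by apply: (coalg_morph_vanish vanish_m) => //; lia.
Qed.

Lemma coalg_morph_sum_i0 i (F : nat -> K) : (0 < i)%N -> (i < n)%N ->
  \sum_(x < n) m i 0%N x * F x = \sum_(1 <= x < i.+1) m i 0%N x * F x.
Proof.
move=> pos_i lt_in.
rewrite -(big_mkord xpredT (fun x => m i 0%N x * F x)) (@big_cat_nat _ _ _ i.+1) //=.
rewrite [X in _ + X]big_nat_cond [X in _ + X]big1 ?addr0; last first.
  by move=> x /andP[/andP[le_ix lt_xn] _]; rewrite coalg_morph_deg ?mul0r //; lia.
by rewrite big_ltn // coalg_morph_counit // (_ : (i == 0) = false) ?mul0r ?add0r //; lia.
Qed.

End CoalgMorph.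

Definition comp_coef (K : fieldType) n (m m1 m2 : lmap K) (a b c e k : nat) : K :=
  \sum_(x < n) \sum_(l < n) m1 a b x * m2 c e l * m x l k.

Section Composite.
Variables (K : fieldType) (n : nat).
Hypothesis n_gt1 : (1 < n)%N.
Let n_gt0 : (0 < n)%N := ltnW n_gt1.

Lemma app_app_bx (m m1 m2 : lmap K) (a b c e k : 'I_n) :
  app m (app m1 (bx K a) (bx K b)) (app m2 (bx K c) (bx K e)) k =
  comp_coef n m m1 m2 a b c e k.
Proof. by rewrite ffunE; apply: eq_bigr => x _; apply: eq_bigr => l _; rewrite !app_bx. Qed.

Lemma app_app_bx_bx (m m1 : lmap K) (a b e k : 'I_n) :
  app m (app m1 (bx K a) (bx K b)) (bx K e) k = \sum_(x < n) m1 a b x * m x e k.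
Proof.
rewrite ffunE; apply: eq_bigr => x _; rewrite (big_only1 e) // => [|l /negbTE ne_l _].
  by rewrite app_bx bxE eqxx mulr1.
by rewrite bxE ne_l mulr0 mul0r.
Qed.

Lemma comp_coef_r00 (m m1 m2 : lmap K) a b k : is_coalg_morph n m2 ->
  comp_coef n m m1 m2 a b 0%N 0%N k = \sum_(x < n) m1 a b x * m x 0%N k.
Proof.
move=> m2_morph; apply: eq_bigr => x _; rewrite (big_ord_only n_gt0) => [|l ne_l0].
  by rewrite (coalg_morph_counit n_gt1 m2_morph) // mulr1.
rewrite (coalg_morph_deg n_gt1 m2_morph) ?mulr0 ?mul0r //; have := ltn_ord l; lia.
Qed.

Lemma comp_coef_antidiag (m m1 m2 : lmap K) M I J :
  is_coalg_morph n m1 -> is_coalg_morph n m2 ->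
  vanish1_below n m M -> vanish1_below n m1 M -> vanish1_below n m2 M ->
  (2 <= M)%N -> (I + J = M)%N -> (0 < J)%N -> (I < n)%N -> (J < n)%N ->
  \sum_(b < J.+1) comp_coef n m m1 m2 I b 0%N (J - b)%N 1%N = m1 I J 1%N * m 1%N 0%N 1%N.
Proof.
move=> m1_morph m2_morph vanish_m vanish_m1 vanish_m2 le2M IJ_M pos_J lt_In lt_Jn.
rewrite big_ord_recr /= subnn comp_coef_r00 // big1 ?add0r => [|b _].
  rewrite (big_ord_only n_gt1) //= => x ne_x1.
  case: (posnP x) => [-> | pos_x].
    by rewrite (coalg_morph_counit n_gt1 m1_morph) // (_ : (J == 0) = false) ?andbF ?mul0r //; lia.
  by rewrite (coalg_morph_vanish n_gt1 m1_morph vanish_m1) ?mul0r //; have := ltn_ord x; lia.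
apply: big1 => x _; apply: big1 => l _; have := ltn_ord b; have := ltn_ord x; have := ltn_ord l.
move=> lt_ln lt_xn lt_bJ; have lt_Jbn : (J - b < n)%N by lia.
case: (posnP l) => [-> | pos_l].
  by rewrite (coalg_morph_counit n_gt1 m2_morph) // subn_eq0 leqNgt lt_bJ andbF mulr0 mul0r.
case: (ltnP (x + l) M) => [lt_xlM | le_Mxl]; first by rewrite vanish_m ?mulr0.
case: (ltnP (I + b) x) => [lt_Ibx | le_xIb].
  by rewrite (coalg_morph_deg n_gt1 m1_morph) ?mul0r //; lia.
by rewrite (coalg_morph_vanish n_gt1 m2_morph vanish_m2) ?mulr0 ?mul0r //; lia.
Qed.

Lemma comp_coef_diag (m m1 m2 : lmap K) I J :
  is_coalg_morph n m1 -> is_coalg_morph n m2 -> vanish1_below n m (I + J) ->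
  (I < n)%N -> (J < n)%N -> (0 < J)%N ->
  comp_coef n m m1 m2 I 0%N J 0%N 1%N = m1 I 0%N I * m2 J 0%N J * m I J 1%N.
Proof.
move=> m1_morph m2_morph vanish_m lt_In lt_Jn pos_J.
have m2_J00 : m2 J 0%N 0%N = 0.
  by rewrite (coalg_morph_counit n_gt1 m2_morph) // (_ : (J == 0) = false) //; lia.
rewrite /comp_coef (big_ord_only lt_In) => [|x ne_xI]; last first.
  apply: big1 => l _; have := ltn_ord x; have := ltn_ord l; move=> lt_ln lt_xn.
  case: (posnP l) => [-> | pos_l]; first by rewrite m2_J00 mulr0 mul0r.
  case: (ltnP (x + l) (I + J)) => [lt_xl | le_xl]; first by rewrite vanish_m ?mulr0.
  case: (ltnP I x) => [lt_Ix | le_xI].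
    by rewrite (coalg_morph_deg n_gt1 m1_morph) ?mul0r //; lia.
  by rewrite (coalg_morph_deg n_gt1 m2_morph (k := l)) ?mulr0 ?mul0r //; lia.
rewrite (big_ord_only lt_Jn) //= => l ne_lJ; have := ltn_ord l; move=> lt_ln.
case: (posnP l) => [-> | pos_l]; first by rewrite m2_J00 mulr0 mul0r.
case: (ltnP (I + l) (I + J)) => [lt_Il | le_Il]; first by rewrite vanish_m ?mulr0.
by rewrite (coalg_morph_deg n_gt1 m2_morph (k := l)) ?mulr0 ?mul0r //; lia.
Qed.

End Composite.

Section QCycle.
Variables (K : fieldType) (n : nat) (p d : lmap K).
Hypotheses (n_gt1 : (1 < n)%N) (pd_qcycle : regular_qcycle n p d).
Let n_gt0 : (0 < n)%N := ltnW n_gt1.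
Let p_morph : is_coalg_morph n p := pd_qcycle.1.1.
Let d_morph : is_coalg_morph n d := pd_qcycle.1.2.1.

Lemma qcycle_p101_d101_neq0 : p 1%N 0%N 1%N != 0 /\ d 1%N 0%N 1%N != 0.
Proof.
case: pd_qcycle.1.2.2 => up [lo [up_morph [_ reg]]].
have [+ _ + _] := reg (bx K (Ordinal n_gt1)) (bx K (Ordinal n_gt0)).
move=> /(congr1 (fun f : vect K n => f (Ordinal n_gt1))) up_p.
move=> /(congr1 (fun f : vect K n => f (Ordinal n_gt1))) d_lo.
move: up_p d_lo; rewrite !sw_bx0 // !escal_bx0 // !app_app_bx_bx bxE eqxx /=.
rewrite (coalg_morph_sum_i0 n_gt1 up_morph (fun x => p x 0%N 1%N)) //.
rewrite (coalg_morph_sum_i0 n_gt1 d_morph (fun x => lo x 0%N 1%N)) // !big_nat1.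
by move=> up_p d_lo; split; apply/eqP => m0; [move: up_p | move: d_lo];
  rewrite m0 ?mulr0 ?mul0r => /eqP; rewrite eq_sym oner_eq0.
Qed.

Lemma qcycle1_coef1 I J : (I < n)%N -> (J < n)%N ->
  \sum_(b < J.+1) comp_coef n p p d I b 0%N (J - b)%N 1%N =
  comp_coef n p p p I 0%N J 0%N 1%N.
Proof.
move=> lt_In lt_Jn.
have [+ _ _] :=
  pd_qcycle.2 (bx K (Ordinal lt_In)) (bx K (Ordinal lt_Jn)) (bx K (Ordinal n_gt0)).
move/(congr1 (fun f : vect K n => f (Ordinal n_gt1))).
rewrite [sw (bx K (Ordinal n_gt0)) _]sw_bx0 // sw_bx app_app_bx /=.
under eq_bigr do under eq_bigr do rewrite app_app_bx /=.
by rewrite (big_antidiag (fun b1 b2 => comp_coef n p p d I b1 0 b2 1) lt_Jn).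
Qed.

Lemma qcycle2_coef1 I J : (I < n)%N -> (J < n)%N ->
  comp_coef n d p p I 0%N J 0%N 1%N =
  \sum_(b < J.+1) comp_coef n p d d I b 0%N (J - b)%N 1%N.
Proof.
move=> lt_In lt_Jn.
have [_ + _] :=
  pd_qcycle.2 (bx K (Ordinal lt_In)) (bx K (Ordinal n_gt0)) (bx K (Ordinal lt_Jn)).
move/(congr1 (fun f : vect K n => f (Ordinal n_gt1))).
rewrite [sw (bx K (Ordinal n_gt0)) _]sw_bx0 // sw_bx app_app_bx /= => ->.
under eq_bigr do under eq_bigr do rewrite app_app_bx /=.
rewrite (big_antidiag (fun b1 b2 => comp_coef n p d d I b2 0 b1 1) lt_Jn).
rewrite (reindex_inj rev_ord_inj) /=; apply: eq_bigr => b _.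
by rewrite subSS subKn // -ltnS.
Qed.

Lemma qcycle_vanish1_below_succ k : (0 < k)%N -> p 1%N 0%N 1%N ^+ k != 1 ->
  vanish1_below n p k.+1 -> vanish1_below n d k.+1 ->
  vanish1_below n p k.+2 /\ vanish1_below n d k.+2.
Proof.
move=> pos_k qk_neq1 vanish_p vanish_d; have [q_neq0 _] := qcycle_p101_d101_neq0.
have top_eq0 (X : K) i j : (i + j = k.+1)%N ->
    X * p 1%N 0%N 1%N = p 1%N 0%N 1%N ^+ i * p 1%N 0%N 1%N ^+ j * X -> X = 0.
  by move=> ij_k1; rewrite -exprD ij_k1; apply: eq0_of_mul_exprS.
have vanish_succ (m : lmap K) : vanish1_below n m k.+1 ->
    (forall i j, (i < n)%N -> (j < n)%N -> (0 < j)%N -> (i + j = k.+1)%N -> m i j 1%N = 0) ->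
    vanish1_below n m k.+2.
  move=> vanish_m top_m i j lt_in lt_jn pos_j.
  by rewrite ltnS leq_eqVlt => /orP[/eqP | ]; [exact: top_m | exact: vanish_m].
have lt1k : (1 < k.+1)%N by lia.
split; apply: vanish_succ => // i j lt_in lt_jn pos_j ij_k1; apply: (top_eq0 _ i j ij_k1).
  rewrite -(comp_coef_antidiag n_gt1 p_morph d_morph vanish_p vanish_p vanish_d) //.
  rewrite qcycle1_coef1 // (comp_coef_diag n_gt1 p_morph p_morph) ?ij_k1 //.
  by rewrite (coalg_morph_top0 n_gt1 p_morph lt_in) (coalg_morph_top0 n_gt1 p_morph lt_jn).
rewrite -(comp_coef_antidiag n_gt1 d_morph d_morph vanish_p vanish_d vanish_d) //.
rewrite -qcycle2_coef1 // (comp_coef_diag n_gt1 p_morph p_morph) ?ij_k1 //.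
by rewrite (coalg_morph_top0 n_gt1 p_morph lt_in) (coalg_morph_top0 n_gt1 p_morph lt_jn).
Qed.

Lemma qcycle_vanish1_below s : [pchar K] =i pred0 -> (1 <= s)%N ->
  (forall r, (0 < r < s)%N -> p 1%N 0%N 1%N ^+ r != 1) ->
  vanish1_below n p s.+1 /\ vanish1_below n d s.+1.
Proof.
move=> char0; elim: s => [//|s IHs] _ q_ne1; have [p101_neq0 d101_neq0] := qcycle_p101_d101_neq0.
case: (posnP s) => [-> | pos_s].
  by split; apply: coalg_morph_vanish1_below2.
have [vanish_p vanish_d] : vanish1_below n p s.+1 /\ vanish1_below n d s.+1.
  by apply: IHs => // r /andP[pos_r lt_rs]; apply: q_ne1; lia.
by apply: qcycle_vanish1_below_succ => //; apply: q_ne1; lia.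
Qed.

Lemma qcycle_d_i01_recursion i : (0 < i)%N -> (i < n)%N ->
  d i 0%N 1%N * (p 1%N 0%N 1%N - p i 0%N i) =
  \sum_(1 <= h < i) p i 0%N h * d h 0%N 1%N - \sum_(2 <= h < i.+1) d i 0%N h * p h 0%N 1%N.
Proof.
move=> pos_i lt_in; have := qcycle2_coef1 lt_in n_gt0.
rewrite big_ord1 /= sub0n !(comp_coef_r00 n_gt1) //.
rewrite (coalg_morph_sum_i0 n_gt1 p_morph (fun x => d x 0%N 1%N)) //.
rewrite (coalg_morph_sum_i0 n_gt1 d_morph (fun x => p x 0%N 1%N)) //.
rewrite big_nat_recr // [in RHS]big_ltn //= => sums_eq.
by rewrite -[X in _ = X - _](addrK (p i 0%N i * d i 0%N 1%N)) sums_eq; ring.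
Qed.

End QCycle.

Unset Implicit Arguments.

Theorem theorem6p1 (K : closedFieldType) (n : nat) (p d : lmap K) (s : nat) :
  [pchar K] =i pred0 -> (1 < n)%N ->
  regular_qcycle n p d ->
  (1 <= s)%N ->
  (forall r : nat, (0 < r < s)%N -> (p 1%N 0%N 1%N) ^+ r != 1) ->
  (forall i j k : nat, (i < n)%N -> (j < n)%N -> (k < n)%N ->
     i != 0%N -> j != 0%N -> (i + j <= s)%N ->
     p i j k = 0 /\ d i j k = 0) /\
  (forall i : nat, (1 < i)%N -> (i <= s)%N -> (i < n)%N ->
     p 1 0 1 - p i 0 i != 0 /\
     d i 0 1 * (p 1 0 1 - p i 0 i) =
       \sum_(1 <= h < i) p i 0 h * d h 0 1
       - \sum_(2 <= h < i.+1) d i 0 h * p h 0 1).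
Proof.
move=> char0 n_gt1 pd_qcycle s_ge1 q_ne1.
have [p_morph [d_morph _]] := pd_qcycle.1.
have [vanish_p vanish_d] := qcycle_vanish1_below n_gt1 pd_qcycle char0 s_ge1 q_ne1.
(* The first claim does not need i <> 0. *)
split=> [i j k lt_in lt_jn lt_kn _ j_neq0 le_ijs | i gt1_i le_is lt_in].
  have pos_j : (0 < j)%N by rewrite lt0n.
  by split; [apply: (coalg_morph_vanish_below n_gt1 p_morph vanish_p) |
             apply: (coalg_morph_vanish_below n_gt1 d_morph vanish_d)].
split; last exact: (qcycle_d_i01_recursion n_gt1 pd_qcycle (ltnW gt1_i) lt_in).
have [p101_neq0 _] := qcycle_p101_d101_neq0 n_gt1 pd_qcycle.
rewrite (coalg_morph_top0 n_gt1 p_morph lt_in) -(prednK (ltnW gt1_i)) exprS.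
rewrite -{1}(mulr1 (p _ _ _)) -mulrBr mulf_neq0 //.
by rewrite subr_eq0 eq_sym q_ne1 //; lia.
Qed.
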